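(* Let $n\ge2$, let $K$ be an oriented $(n-1)$-dimensional pseudo-manifold with vertex set $\mathbb{V}(K)$ and edge set $\mathbb{E}(K)$, and let $\boldsymbol{\ell}=(\ell_e)_{e\in\mathbb{E}(K)}$ be positive reals such that polyhedra of combinatorial type $K$ with edge lengths $\boldsymbol{\ell}$ have non-degenerate faces. Then for each $(n-2)$-dimensional face $F$ of $K$ there is a polynomial $Q_F$ in the coordinates $x_{v,j}$ such that $\exp(i\alpha_F(P))=Q_F(P)$ for all $P\in\Sigma^+(\boldsymbol{\ell})$.
   Context: $\Lambda^n=\{\mathbf{x}\in\mathbb{R}^{1,n}:\langle\mathbf{x},\mathbf{x}\rangle=1,x_0>0\}$, $\langle\mathbf{x},\mathbf{y}\rangle=x_0y_0-\sum_{j\ge1}x_jy_j$. A polyhedron of combinatorial type $K$ is a map $P\colon K\to\Lambda^n$ pseudo-linear on each simplex ($P(\sum\beta_jv_j)=\sum\beta_jP(v_j)/|\sum\beta_jP(v_j)|$); it is determined by the vectors $\mathbf{x}_v=P(v)$, $v\in\mathbb{V}(K)$, with coordinates $x_{v,0},\dots,x_{v,n}$, so it is a point of $\mathbb{R}^{m(n+1)}$, $m=|\mathbb{V}(K)|$. $\Sigma^+(\boldsymbol{\ell})\subset\mathbb{R}^{m(n+1)}$ is given by $\langle\mathbf{x}_v,\mathbf{x}_v\rangle=1$, $x_{v,0}>0$ for all $v$, and $\langle\mathbf{x}_u,\mathbf{x}_v\rangle=\cosh\ell_{[uv]}$ for all edges $[uv]$. Non-degenerate faces: every simplex of $K$ maps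 to a non-degenerate simplex of the same dimension. Oriented dihedral angle $\alpha_F(P)\in\mathbb{R}/2\pi\mathbb{Z}$ at an $(n-2)$-face $F$ contained in the $(n-1)$-simplices $\sigma_1,\sigma_2$: at $\mathbf{x}\in P(F)$ let $\mathbf{n}_i\in T_{\mathbf{x}}P(\sigma_i)$ be the unit vectors orthogonal to $T_{\mathbf{x}}P(F)$ pointing into $P(\sigma_i)$, and $\mathbf{m}_1$ the unit normal to $P(\sigma_1)$ such that the direction of $\mathbf{m}_1$ followed by the positive orientation of $P(\sigma_1)$ gives the positive orientation of $\Lambda^n$; with rotation from $\mathbf{m}_1$ to $\mathbf{n}_1$ positive, $\alpha_F$ is the angle from $\mathbf{n}_1$ to $\mathbf{n}_2$. *)

From HB Require Import structures.
From mathcomp Require Import all_boot all_order all_algebra.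
From mathcomp Require Import all_classical all_reals all_analysis.
From mathcomp Require Import complex.
From mathcomp Require mpoly.
Set Implicit Arguments. Unset Strict Implicit. Unset Printing Implicit Defensive.
Import Order.TTheory GRing.Theory Num.Theory.
Local Open Scope ring_scope.

(* facets = (n-1)-simplices, i.e. simplices with n vertices *)
Definition is_facet (m n : nat) (K : {set {set 'I_m}}) (s : {set 'I_m}) : bool :=
  (s \in K) && (#|s| == n).

Definition facet_adj (m n : nat) (K : {set {set 'I_m}}) : rel {set 'I_m} :=
  [rel s t | [&& is_facet n K s, is_facet n K t & #|s :&: t| == n.-1]].

(* K is an abstract simplicial complex with vertex set 'I_m which is an
   (n-1)-dimensional pseudo-manifold: pure, non-branching, strongly connected *)
Definition pseudo_manifold (m n : nat) (K : {set {set 'I_m}}) : Prop :=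
  (forall s : {set 'I_m}, s \in K -> (0 < #|s|)%N) /\
  [/\ (forall s t : {set 'I_m}, s \in K -> t \subset s -> (0 < #|t|)%N -> t \in K),
      (forall v : 'I_m, [set v] \in K),
      (forall s : {set 'I_m}, s \in K -> exists2 f, is_facet n K f & s \subset f),
      (forall F : {set 'I_m}, F \in K -> #|F| = n.-1 ->
          #|[set f | is_facet n K f && (F \subset f)]| = 2)
    & (forall f g : {set 'I_m}, is_facet n K f -> is_facet n K g -> connect (facet_adj n K) f g)].

(* An orientation: o f = false means the positive orientation of the facet f is
   the increasing ordering of its vertices, o f = true the opposite one.
   The orientation induced on an (n-2)-face F of f = F + {w} is
   (-1)^(o f + k) times the increasing ordering of F, where k is the position
   of w in the increasing ordering of f.  Oriented = the two orientations
   induced on every (n-2)-face are opposite. *)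
Definition oriented_pseudo_manifold (m n : nat) (K : {set {set 'I_m}})
    (o : {set 'I_m} -> bool) : Prop :=
  pseudo_manifold n K /\
  forall (F f g : {set 'I_m}) (wf wg : 'I_m), F \in K -> #|F| = n.-1 ->
    is_facet n K f -> is_facet n K g -> f != g -> F \subset f -> F \subset g ->
    wf \in f :\: F -> wg \in g :\: F ->
    odd (o f + #|[set u in F | (u < wf)%N]| + o g + #|[set u in F | (u < wg)%N]|).

Definition mink (R : realType) (n : nat) (u v : 'rV[R]_n.+1) : R :=
  u 0 0 * v 0 0 - \sum_(j < n.+1 | j != ord0) u 0 j * v 0 j.

Definition cosh_ (R : realType) (x : R) : R := (expR x + expR (- x)) / 2.

(* A polyhedron of type K is given by the matrix X whose row v is x_v = P(v). *)
Definition in_Sigma_plus (R : realType) (m n : nat) (K : {set {set 'I_m}})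
    (ell : {set 'I_m} -> R) (X : 'M[R]_(m, n.+1)) : Prop :=
  (forall v : 'I_m, mink (row v X) (row v X) = 1 /\ 0 < X v 0) /\
  (forall u v : 'I_m, u != v -> [set u; v] \in K ->
       mink (row u X) (row v X) = cosh_ (ell [set u; v])).

(* non-degenerate faces: every simplex of K goes to a non-degenerate simplex of
   the same dimension, i.e. the x_v, v in s, are linearly independent *)
Definition nondegenerate_faces (R : realType) (m n : nat) (K : {set {set 'I_m}})
    (X : 'M[R]_(m, n.+1)) : Prop :=
  forall s : {set 'I_m}, s \in K -> forall c : 'I_m -> R,
    \sum_(v in s) c v *: row v X = 0 -> forall v, v \in s -> c v = 0.

Definition span_of (R : realType) (m n : nat) (X : 'M[R]_(m, n.+1))
    (s : {set 'I_m}) (u : 'rV[R]_n.+1) : Prop :=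
  exists c : 'I_m -> R, u = \sum_(v in s) c v *: row v X.

Definition in_cone (R : realType) (m n : nat) (X : 'M[R]_(m, n.+1))
    (s : {set 'I_m}) (u : 'rV[R]_n.+1) : Prop :=
  exists c : 'I_m -> R, (forall v, 0 <= c v) /\ u = \sum_(v in s) c v *: row v X.

(* x is a point of the relative interior of P(F) (pseudo-linear image of a
   point of the open simplex F) *)
Definition interior_point (R : realType) (m n : nat) (X : 'M[R]_(m, n.+1))
    (F : {set 'I_m}) (x : 'rV[R]_n.+1) : Prop :=
  exists beta : 'I_m -> R, [/\ (forall v, v \in F -> 0 < beta v),
     \sum_(v in F) beta v = 1 &
     x = (Num.sqrt (mink (\sum_(v in F) beta v *: row v X)
                         (\sum_(v in F) beta v *: row v X)))^-1
           *: \sum_(v in F) beta v *: row v X].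

(* nv is the unit vector of T_x P(f) orthogonal to T_x P(F) pointing into P(f).
   T_x Lambda^n = x^perp (Minkowski), with Riemannian metric -mink;
   T_x P(s) = span{x_v : v in s} /\ x^perp. *)
Definition inward_normal (R : realType) (m n : nat) (X : 'M[R]_(m, n.+1))
    (F f : {set 'I_m}) (x nv : 'rV[R]_n.+1) : Prop :=
  [/\ span_of X f nv, mink nv x = 0,
      (forall u, span_of X F u -> mink u x = 0 -> mink nv u = 0),
      mink nv nv = -1
    & exists2 eps : R, 0 < eps &
        forall t : R, 0 < t -> t < eps -> in_cone X f (x + t *: nv)].

(* tangential projection onto x^perp (for mink x x = 1) *)
Definition proj_tan (R : realType) (n : nat) (x u : 'rV[R]_n.+1) : 'rV[R]_n.+1 :=
  u - mink u x *: x.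

Definition fvert (R : realType) (m n : nat) (X : 'M[R]_(m, n.+1))
    (f : {set 'I_m}) (k : nat) : 'rV[R]_n.+1 :=
  nth 0 [seq row v X | v <- enum f] k.

(* rows: x, mv, then the image under the differential of the pseudo-linear map
   of the frame (v_1 - v_0, ..., v_{n-1} - v_0) of the facet f (increasing
   vertex order), up to positive factors *)
Definition orient_frame (R : realType) (m n : nat) (X : 'M[R]_(m, n.+1))
    (f : {set 'I_m}) (x mv : 'rV[R]_n.+1) : 'M[R]_(n.+1) :=
  \matrix_(i < n.+1)
    (if (i : nat) == 0%N then x
     else if (i : nat) == 1%N then mv
     else proj_tan x (fvert X f i.-1 - fvert X f 0)).

(* mv is the unit normal to P(f) at x such that (mv, positive frame of P(f))
   is a positive frame of Lambda^n.  Convention: a basis (b_1,..,b_n) of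
   T_x Lambda^n is positive iff det(x, b_1, ..., b_n) > 0. *)
Definition oriented_normal (R : realType) (m n : nat) (X : 'M[R]_(m, n.+1))
    (o : {set 'I_m} -> bool) (f : {set 'I_m}) (x mv : 'rV[R]_n.+1) : Prop :=
  [/\ mink mv x = 0,
      (forall u, span_of X f u -> mink u x = 0 -> mink mv u = 0),
      mink mv mv = -1
    & 0 < (-1) ^+ o f * \det (orient_frame X f x mv)].

(* alpha is (a representative of) the oriented dihedral angle alpha_F(P) at
   the (n-2)-face F between the facets f1, f2, computed at the point x of P(F):
   the angle from n1 to n2 in the plane where the rotation from m1 to n1 is
   positive, i.e. n2 = cos alpha n1 + sin alpha J n1 with J n1 = - m1. *)
Definition is_oriented_dihedral_angle (R : realType) (m n : nat)
    (X : 'M[R]_(m, n.+1)) (o : {set 'I_m} -> bool) (F f1 f2 : {set 'I_m})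
    (x : 'rV[R]_n.+1) (alpha : R) : Prop :=
  exists n1 n2 m1 : 'rV[R]_n.+1,
    [/\ inward_normal X F f1 x n1, inward_normal X F f2 x n2,
        oriented_normal X o f1 x m1
      & n2 = cos alpha *: n1 - sin alpha *: m1].

Definition coords (R : realType) (m n : nat) (X : 'M[R]_(m, n.+1)) :
    'I_(m * n.+1) -> R[i] :=
  fun k => Complex (mxvec X 0 k) 0.

From HB Require Import structures.
From mathcomp Require Import all_boot all_order all_algebra.
From mathcomp Require Import all_classical all_reals all_analysis.
From mathcomp Require Import complex.
From mathcomp Require mpoly.
From mathcomp Require Import perm.
From mathcomp Require Import ring lra zify.
Set Implicit Arguments. Unset Strict Implicit. Unset Printing Implicit Defensive.
Import Order.TTheory GRing.Theory Num.Theory.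
Local Open Scope ring_scope.

(* At a point x of P(F), the inward unit normal of a facet f = F + {w} is a
   combination of the vertex vectors x_v, v in f, with coefficients determined
   by the Gram matrix of these vectors, i.e. by the edge lengths alone (the
   unit timelike vector x makes the normal unique).  Hence the normals n1, n2
   of the two facets at F are linear in the coordinates of P with coefficients
   independent of P in Sigma^+(l), and cos alpha = - <n1, n2>.  The form
   omega(a, b) = det (a, b, x_u : u in F) ([face_det]) kills the span of P(F), so
   sin alpha = omega(n1, n2) / omega(m1, n1); the denominator is constant
   because its square is the Gram determinant of (m1, n1, x_u : u in F),
   again fixed by the edge lengths, and its sign is fixed by the orientation. *)

(* The ring structure of [mpoly] only becomes canonical on [Import mpoly], whose
   notations clash with those of mathcomp-analysis. *)
Canonical mpoly.mpoly_mpoly__canonical__eqtype_Equality.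
Canonical mpoly.mpoly_mpoly__canonical__choice_Choice.
Canonical mpoly.mpoly_mpoly__canonical__Algebra_BaseAddMagma.
Canonical mpoly.mpoly_mpoly__canonical__Algebra_ChoiceBaseAddMagma.
Canonical mpoly.mpoly_mpoly__canonical__Algebra_AddMagma.
Canonical mpoly.mpoly_mpoly__canonical__Algebra_AddSemigroup.
Canonical mpoly.mpoly_mpoly__canonical__Algebra_BaseAddUMagma.
Canonical mpoly.mpoly_mpoly__canonical__Algebra_ChoiceBaseAddUMagma.
Canonical mpoly.mpoly_mpoly__canonical__Algebra_AddUMagma.
Canonical mpoly.mpoly_mpoly__canonical__Algebra_Nmodule.
Canonical mpoly.mpoly_mpoly__canonical__Algebra_BaseZmodule.
Canonical mpoly.mpoly_mpoly__canonical__Algebra_Zmodule.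
Canonical mpoly.mpoly_mpoly__canonical__GRing_PzSemiRing.
Canonical mpoly.mpoly_mpoly__canonical__GRing_NzSemiRing.
Canonical mpoly.mpoly_mpoly__canonical__GRing_PzRing.
Canonical mpoly.mpoly_mpoly__canonical__GRing_NzRing.
Canonical mpoly.mpoly_mpoly__canonical__GRing_ComPzSemiRing.
Canonical mpoly.mpoly_mpoly__canonical__GRing_ComNzSemiRing.
Canonical mpoly.mpoly_mpoly__canonical__GRing_ComPzRing.
Canonical mpoly.mpoly_mpoly__canonical__GRing_ComNzRing.

Section Minkowski.
Variables (R : realType) (n : nat).
Implicit Types u v w x z : 'rV[R]_n.+1.

Definition mink_sign (j : 'I_n.+1) : R := if j == ord0 then 1 else -1.

Lemma minkE u v : mink u v = \sum_j mink_sign j * (u 0 j * v 0 j).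
Proof.
rewrite /mink [RHS](bigD1 ord0) //= /mink_sign eqxx mul1r.
rewrite -sumrN; congr (_ + _); apply: eq_bigr => j /negPf ->.
by rewrite mulN1r.
Qed.

Lemma minkC u v : mink u v = mink v u.
Proof. by rewrite !minkE; apply: eq_bigr => j _; rewrite (mulrC (u 0 j)). Qed.

Lemma minkDl u v w : mink (u + v) w = mink u w + mink v w.
Proof. rewrite !minkE -big_split; apply: eq_bigr => j _; rewrite !mxE /=; ring. Qed.

Lemma minkZl a u w : mink (a *: u) w = a * mink u w.
Proof. by rewrite !minkE mulr_sumr; apply: eq_bigr => j _; rewrite !mxE; ring. Qed.

Lemma mink0l w : mink 0 w = 0.
Proof. by rewrite -(scale0r 0) minkZl mul0r. Qed.

Lemma minkBl u v w : mink (u - v) w = mink u w - mink v w.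
Proof. by rewrite minkDl -scaleN1r minkZl mulN1r. Qed.

Lemma minkZr a u w : mink w (a *: u) = a * mink w u.
Proof. by rewrite !(minkC w) minkZl. Qed.

Lemma minkBr u v w : mink w (u - v) = mink w u - mink w v.
Proof. by rewrite !(minkC w) minkBl. Qed.

Lemma mink_suml (I : Type) (r : seq I) (P : pred I) (F : I -> 'rV[R]_n.+1) w :
  mink (\sum_(i <- r | P i) F i) w = \sum_(i <- r | P i) mink (F i) w.
Proof.
elim: r => [|a r IH]; first by rewrite !big_nil mink0l.
by rewrite !big_cons; case: (P a); rewrite ?minkDl IH.
Qed.


Definition mink_mx : 'M[R]_n.+1 := diag_mx (\row_j mink_sign j).

Lemma mink_gramE (N : nat) (A B : 'M[R]_(N, n.+1)) i j :
  (A *m mink_mx *m B^T) i j = mink (row i A) (row j B).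
Proof.
rewrite minkE !mxE; apply: eq_bigr => k _.
rewrite !mxE (bigD1 k) //= big1 ?addr0; last first.
  by move=> l /negPf nlk; rewrite !mxE nlk mulr0n mulr0.
by rewrite !mxE eqxx mulr1n; ring.
Qed.

Lemma det_mink_mx : \det mink_mx = (-1) ^+ n.
Proof.
rewrite det_diag big_ord_recl !mxE /mink_sign eqxx mul1r.
by rewrite (eq_bigr (fun _ => -1)) ?prodr_const ?card_ord // => i _; rewrite mxE.
Qed.

(* The orthogonal complement of a timelike vector is spacelike: Lagrange's
   identity on the space coordinates. *)
Lemma orth_timelike_null_eq0 x z :
  mink x x = 1 -> mink z x = 0 -> mink z z = 0 -> z = 0.
Proof.
move=> hx hzx hzz.
set Sx := \sum_(j < n.+1 | j != ord0) x 0 j ^+ 2.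
set Sz := \sum_(j < n.+1 | j != ord0) z 0 j ^+ 2.
set Szx := \sum_(j < n.+1 | j != ord0) z 0 j * x 0 j.
have eSx : x 0 0 ^+ 2 = 1 + Sx.
  rewrite /Sx (eq_bigr (fun j => x 0 j * x 0 j)) => [|j _]; last by rewrite expr2.
  by move: hx; rewrite /mink expr2; lra.
have eSz : z 0 0 ^+ 2 = Sz.
  rewrite /Sz (eq_bigr (fun j => z 0 j * z 0 j)) => [|j _]; last by rewrite expr2.
  by move: hzz; rewrite /mink expr2; lra.
have eSzx : z 0 0 * x 0 0 = Szx by move: hzx; rewrite /mink -/Szx; lra.
have lagrange : \sum_(j < n.+1 | j != ord0) (z 0 j * x 0 0 - x 0 j * z 0 0) ^+ 2
    = x 0 0 ^+ 2 * Sz - 2 * (x 0 0 * z 0 0) * Szx + z 0 0 ^+ 2 * Sx.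
  by rewrite !mulr_sumr -sumrB -big_split /=; apply: eq_bigr => j _; ring.
have z00 : z 0 0 = 0.
  have : 0 <= - z 0 0 ^+ 2.
    have -> : - z 0 0 ^+ 2 = x 0 0 ^+ 2 * Sz - 2 * (x 0 0 * z 0 0) * Szx + z 0 0 ^+ 2 * Sx.
      rewrite -eSz -eSzx; have -> : Sx = x 0 0 ^+ 2 - 1 by rewrite eSx; ring.
      ring.
    by rewrite -lagrange; apply: sumr_ge0 => j _; exact: sqr_ge0.
  by rewrite oppr_ge0 => h; apply/eqP; rewrite -sqrf_eq0 eq_le h sqr_ge0.
apply/rowP => j; rewrite mxE.
have [->|jn0] := eqVneq j ord0; first by rewrite z00.
move: eSz; rewrite z00 expr0n /= => /esym /eqP; rewrite psumr_eq0; last first.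
  by move=> i _; exact: sqr_ge0.
by move=> /allP /(_ j (mem_index_enum _)); rewrite jn0 /= sqrf_eq0 => /eqP.
Qed.

End Minkowski.

Section DeterminantRows.
Variable R : realType.

Lemma det_unitrig N (T : 'M[R]_N) :
  (forall i j : 'I_N, (i < j)%N -> T i j = 0) -> (forall i, T i i = 1) -> \det T = 1.
Proof.
move=> T0 T1; rewrite det_trig; last by apply/is_trig_mxP.
by rewrite big1.
Qed.

Lemma det_unitrig_tr N (T : 'M[R]_N) :
  (forall i j : 'I_N, (j < i)%N -> T i j = 0) -> (forall i, T i i = 1) -> \det T = 1.
Proof.
move=> T0 T1; rewrite -det_tr; apply: det_unitrig => [i j lij|i]; rewrite mxE.
  exact: T0.
exact: T1.
Qed.

Lemma det_xrow N (A : 'M[R]_N) i1 i2 : i1 != i2 -> \det (xrow i1 i2 A) = - \det A.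
Proof. by move=> ne; rewrite xrowE det_mulmx /tperm_mx det_perm odd_tperm ne expr1 mulN1r. Qed.

Variable n : nat.

Definition rowsmx (l : seq 'rV[R]_n.+1) : 'M[R]_n.+1 := \matrix_(i, j) (nth 0 l i) 0 j.

Lemma row_rowsmx l i : row i (rowsmx l) = nth 0 l i.
Proof. by apply/rowP => j; rewrite !mxE. Qed.

Lemma det_rowsmx_linear (l1 l2 : seq 'rV[R]_n.+1) b1 b2 s t :
  (size l1 < n.+1)%N ->
  \det (rowsmx (l1 ++ (s *: b1 + t *: b2) :: l2)) =
  s * \det (rowsmx (l1 ++ b1 :: l2)) + t * \det (rowsmx (l1 ++ b2 :: l2)).
Proof.
move=> hs; set i0 : 'I_n.+1 := inord (size l1).
have i0E : (i0 : nat) = size l1 by rewrite inordK.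
have other_rows b b' : row' i0 (rowsmx (l1 ++ b :: l2)) = row' i0 (rowsmx (l1 ++ b' :: l2)).
  apply/matrixP => i j; rewrite !mxE; congr ((_ : 'rV_n.+1) 0 j).
  have : (lift i0 i : nat) != size l1 by rewrite -i0E eq_sym (inj_eq val_inj) neq_lift.
  move: (lift _ i : nat) => k hk; rewrite !nth_cat; case: ltnP => // hk2.
  have : (0 < k - size l1)%N by rewrite subn_gt0 ltn_neqAle eq_sym hk hk2.
  by case: (k - size l1)%N.
apply: (determinant_multilinear (i0 := i0)) => //.
by rewrite !row_rowsmx i0E !nth_cat ltnn subnn.
Qed.

Lemma det_rowsmx_eq0 (l : seq 'rV[R]_n.+1) (i j : nat) :
  (i < n.+1)%N -> (j < n.+1)%N -> i != j -> nth 0 l i = nth 0 l j -> \det (rowsmx l) = 0.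
Proof.
move=> hi hj ne e; apply: (determinant_alternate (i1 := inord i) (i2 := inord j)).
  by rewrite -(inj_eq val_inj) /= !inordK.
by move=> k; rewrite !mxE !inordK // e.
Qed.

Lemma det_rowsmx_swap (l1 l2 : seq 'rV[R]_n.+1) a b c :
  (size l1 + 2 < n.+1)%N ->
  \det (rowsmx (a :: l1 ++ c :: b :: l2)) = - \det (rowsmx (a :: l1 ++ b :: c :: l2)).
Proof.
move=> hs.
pose i1 : 'I_n.+1 := inord (size l1).+1; pose i2 : 'I_n.+1 := inord (size l1).+2.
have v1 : (i1 : nat) = (size l1).+1 by rewrite inordK // (leq_trans _ hs) // addn2.
have v2 : (i2 : nat) = (size l1).+2 by rewrite inordK // -addn2.
have ne : i1 != i2 by rewrite -(inj_eq val_inj) /= v1 v2 (ltn_eqF (ltnSn _)).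
rewrite -(det_xrow _ ne); congr (\det _); apply/matrixP => i j.
rewrite /xrow !mxE; congr ((_ : 'rV_n.+1) 0 j).
case: tpermP => [->|->|/eqP h1 /eqP h2].
- by rewrite v1 v2 /= !nth_cat ltnn subnn ltnNge leqnSn /= subSn // subnn.
- by rewrite v1 v2 /= !nth_cat ltnn subnn ltnNge leqnSn /= subSn // subnn.
- case: i h1 h2 => [[|k] hk] //= h1 h2.
  rewrite !nth_cat; case: ltnP => // hk2.
  have h1' : k != size l1 by apply: contra h1 => /eqP e; rewrite -(inj_eq val_inj) /= v1 e.
  have h2' : k != (size l1).+1 by apply: contra h2 => /eqP e; rewrite -(inj_eq val_inj) /= v2 e.
  case e: (k - size l1)%N => [|[|k']] //=.
  + by move/eqP: e; rewrite subn_eq0 => e; move: h1'; rewrite eqn_leq e hk2.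
  + by move: h2'; rewrite -(subnK hk2) e eqxx.
Qed.

Lemma det_rowsmx_insert (l1 l2 : seq 'rV[R]_n.+1) a b :
  (size l1 + size l2).+2 = n.+1 ->
  \det (rowsmx (a :: l1 ++ b :: l2)) = (-1) ^+ size l1 * \det (rowsmx (a :: b :: l1 ++ l2)).
Proof.
elim/last_ind: l1 l2 => [|l1 c IH] l2 hs; first by rewrite expr0 mul1r.
rewrite -cats1 -catA /= det_rowsmx_swap; last by move: hs; rewrite ?size_cat ?size_rcons /=; lia.
rewrite IH; last by move: hs; rewrite ?size_cat ?size_rcons /=; lia.
by rewrite size_cat /= addn1 exprS -catA /=; ring.
Qed.

End DeterminantRows.

Section PolynomialFunctions.
Variables (R : realType) (m n : nat).
Implicit Types g h : 'M[R]_(m, n.+1) -> R.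

Definition polyfun g : Prop :=
  exists q : mpoly.mpoly (m * n.+1) R[i],
    forall X, mpoly.meval (coords X) q = real_complex R (g X).

Lemma polyfun_ext g h : polyfun g -> g =1 h -> polyfun h.
Proof. by move=> [q hq] e; exists q => X; rewrite hq e. Qed.

Lemma polyfun_cst c : polyfun (fun _ => c).
Proof. by exists (mpoly.mpolyC _ (real_complex R c)) => X; rewrite mpoly.mevalC. Qed.

Lemma polyfun_coord v j : polyfun (fun X => X v j).
Proof.
exists (mpoly.mpolyX _ (mpoly.mnm1 (mxvec_index v j))) => X.
by rewrite mpoly.mevalXU /coords mxvecE.
Qed.

Lemma polyfunD g h : polyfun g -> polyfun h -> polyfun (fun X => g X + h X).
Proof. by move=> [q hq] [r hr]; exists (q + r) => X; rewrite mpoly.mevalD hq hr rmorphD. Qed.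

Lemma polyfunM g h : polyfun g -> polyfun h -> polyfun (fun X => g X * h X).
Proof. by move=> [q hq] [r hr]; exists (q * r) => X; rewrite mpoly.mevalM hq hr rmorphM. Qed.

Lemma polyfunN g : polyfun g -> polyfun (fun X => - g X).
Proof. by move=> [q hq]; exists (- q) => X; rewrite mpoly.mevalN hq rmorphN. Qed.

Lemma polyfun_sum (I : Type) (r : seq I) (P : pred I) (G : I -> 'M[R]_(m, n.+1) -> R) :
  (forall i, polyfun (G i)) -> polyfun (fun X => \sum_(i <- r | P i) G i X).
Proof.
move=> hG; elim: r => [|a r IH].
  by apply: polyfun_ext (polyfun_cst 0) _ => X; rewrite big_nil.
case hP: (P a); last by apply: polyfun_ext IH _ => X; rewrite big_cons hP.
by apply: polyfun_ext (polyfunD (hG a) IH) _ => X; rewrite big_cons hP.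
Qed.

Lemma polyfun_prod (I : Type) (r : seq I) (P : pred I) (G : I -> 'M[R]_(m, n.+1) -> R) :
  (forall i, polyfun (G i)) -> polyfun (fun X => \prod_(i <- r | P i) G i X).
Proof.
move=> hG; elim: r => [|a r IH].
  by apply: polyfun_ext (polyfun_cst 1) _ => X; rewrite big_nil.
case hP: (P a); last by apply: polyfun_ext IH _ => X; rewrite big_cons hP.
by apply: polyfun_ext (polyfunM (hG a) IH) _ => X; rewrite big_cons hP.
Qed.

Lemma polyfun_det k (A : 'M[R]_(m, n.+1) -> 'M[R]_k) :
  (forall i j, polyfun (fun X => A X i j)) -> polyfun (fun X => \det (A X)).
Proof.
move=> hA; apply: polyfun_sum => s; apply: polyfunM; first exact: polyfun_cst.
by apply: polyfun_prod => i; exact: hA.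
Qed.

Lemma polyfun_complex g h : polyfun g -> polyfun h ->
  exists q : mpoly.mpoly (m * n.+1) R[i],
    forall X, mpoly.meval (coords X) q = Complex (g X) (h X).
Proof.
move=> [q hq] [r hr]; exists (q + mpoly.mpolyC _ (Complex 0 1) * r) => X.
by rewrite mpoly.mevalD mpoly.mevalM mpoly.mevalC hq hr /=; simpc.
Qed.

End PolynomialFunctions.

Section OrientationFrame.
Variables (R : realType) (n : nat).
Implicit Types (a b x : 'rV[R]_n.+1) (r v : nat -> 'rV[R]_n.+1).

Lemma sum_scale_single N (V : lmodType R) (i : 'I_N) (c : 'I_N -> R) (G : 'I_N -> V) :
  (forall k, k != i -> c k = 0) -> \sum_k c k *: G k = c i *: G i.
Proof.
by move=> h; rewrite (bigD1 i) //= big1 ?addr0 // => k hk; rewrite h // scale0r.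
Qed.

Lemma row_mulmx_sum N M P (T : 'M[R]_(N, M)) (B : 'M[R]_(M, P)) i :
  row i (T *m B) = \sum_k T i k *: row k B.
Proof. by rewrite row_mul mulmx_sum_row; apply: eq_bigr => k _; rewrite mxE. Qed.

Definition frame a b r : 'M[R]_n.+1 :=
  \matrix_(i < n.+1) (if (i : nat) == 0%N then a else if (i : nat) == 1%N then b else r i.-1).

Lemma det_frame_subr a b r r' (c : nat -> R) : (forall k, r' k = r k - c k *: a) ->
  \det (frame a b r') = \det (frame a b r).
Proof.
move=> /funext ->.
pose T : 'M[R]_n.+1 :=
  \matrix_(i, k) ((i == k)%:R - ((1 < i)%N && (k == ord0))%:R * c (i : nat).-1).
have -> : frame a b (fun k => r k - c k *: a) = T *m frame a b r.
  apply/row_matrixP => i; rewrite row_mulmx_sum.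
  rewrite (eq_bigr (fun k => (i == k)%:R *: row k (frame a b r) -
      (((1 < i)%N && (k == ord0))%:R * c (i : nat).-1) *: row k (frame a b r)));
    last by move=> k _; rewrite mxE scalerBl.
  rewrite sumrB (@sum_scale_single _ _ i); last by move=> k /negPf; rewrite eq_sym => ->.
  rewrite (@sum_scale_single _ _ ord0); last by move=> k /negPf ->; rewrite andbF mul0r.
  rewrite eqxx andbT !rowK.
  by case: i => [[|[|i]] hi] //=; rewrite ?mul0r ?mul1r ?scale0r ?scale1r ?subr0.
rewrite det_mulmx (@det_unitrig _ _ T) ?mul1r // => [i j hij|i]; rewrite mxE.
  rewrite -(inj_eq val_inj) /= (ltn_eqF hij) -[j == ord0](inj_eq val_inj) /=.
  by rewrite eqn0Ngt (leq_ltn_trans (leq0n i) hij) andbF mul0r subr0.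
by rewrite eqxx; case: eqVneq => [->|_] /=; rewrite ?andbF ?mul0r ?subr0.
Qed.

Lemma det_frame_comb x b v (d : nat -> R) : x = \sum_(j < n) d j *: v j ->
  \det (frame x b (fun k => v k - v 0%N)) =
  (\sum_(j < n) d j) * \det (frame (v 0%N) b (fun k => v k - v 0%N)).
Proof.
move=> hx; set S := \sum_(j < n) d j.
pose B := frame (S *: v 0%N) b (fun k => v k - v 0%N).
pose U : 'M[R]_n.+1 := \matrix_(i, k) ((i == k)%:R + ((i == ord0) && (1 < k)%N)%:R * d (k : nat).-1).
have -> : frame x b (fun k => v k - v 0%N) = U *m B.
  apply/row_matrixP => i; rewrite row_mulmx_sum.
  rewrite (eq_bigr (fun k => (i == k)%:R *: row k B +
      (((i == ord0) && (1 < k)%N)%:R * d (k : nat).-1) *: row k B));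
    last by move=> k _; rewrite mxE scalerDl.
  rewrite big_split /= (@sum_scale_single _ _ i); last by move=> k /negPf; rewrite eq_sym => ->.
  rewrite eqxx scale1r.
  have [->|ni0] := eqVneq i ord0; last first.
    rewrite big1 ?addr0; last by move=> k _; rewrite mul0r scale0r.
    by rewrite !rowK; rewrite -(inj_eq val_inj) /= in ni0; rewrite (negPf ni0).
  rewrite !rowK /= big_ord_recl /= mul0r scale0r add0r.
  rewrite (eq_bigr (fun j : 'I_n => d j *: v j - d j *: v 0%N)); last first.
    move=> j _; rewrite rowK lift0 /= -scalerBr; case: j => [[|j] hj] /=.
      by rewrite !subrr !scaler0 mul0r scale0r.
    by rewrite mul1r.
  by rewrite sumrB -scaler_suml -/S -hx addrC subrK.
rewrite det_mulmx (@det_unitrig_tr _ _ U) ?mul1r => [|i j hij|i]; rewrite ?mxE.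
- rewrite (@determinant_multilinear _ _ B (frame (v 0%N) b (fun k => v k - v 0%N))
    (frame (v 0%N) b (fun k => v k - v 0%N)) ord0 S 0) ?mul0r ?addr0 //.
    by rewrite !rowK /= scale0r addr0.
  1-2: by apply/matrixP => i j; rewrite !mxE lift0.
- rewrite -(inj_eq val_inj) /= (gtn_eqF hij) add0r.
  by case: eqVneq => [ei|]; [move: hij; rewrite ei | rewrite mul0r].
- by rewrite eqxx; case: eqP => [->|]; rewrite ?mul0r ?addr0.
Qed.

Hypothesis n_gt0 : (0 < n)%N.

Lemma det_frame_swap b v :
  \det (frame (v 0%N) b v) = - \det (\matrix_(i < n.+1) (if (i : nat) == 0%N then b else v i.-1)).
Proof.
pose i1 : 'I_n.+1 := inord 1.
have i1E : (i1 : nat) = 1%N by rewrite inordK.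
rewrite -(@det_xrow _ _ _ ord0 i1); last by rewrite -(inj_eq val_inj) /= i1E.
congr (\det _); apply/matrixP => i j; rewrite /xrow !mxE.
case: tpermP => [->|->|/eqP h0 /eqP h1]; rewrite ?mxE ?i1E //=.
case: i h0 h1 => [[|[|k]] hk] //= h0 h1.
by case/eqP: h1; apply: val_inj; rewrite /= i1E.
Qed.

Lemma det_frame_proj_tan x b v (d : nat -> R) : x = \sum_(j < n) d j *: v j ->
  \det (frame x b (fun k => proj_tan x (v k - v 0%N))) =
  - (\sum_(j < n) d j) * \det (\matrix_(i < n.+1) (if (i : nat) == 0%N then b else v i.-1)).
Proof.
move=> hx.
rewrite (@det_frame_subr _ _ (fun k => v k - v 0%N) _ (fun k => mink (v k - v 0%N) x)) //.
rewrite (det_frame_comb _ hx) (@det_frame_subr _ _ v _ (fun _ => 1)) => [|k].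
  by rewrite det_frame_swap mulrN mulNr.
by rewrite scale1r.
Qed.

End OrientationFrame.

Section Geometry.
Variables (R : realType) (n m : nat) (K : {set {set 'I_m}}) (o : {set 'I_m} -> bool)
  (ell : {set 'I_m} -> R).
Hypothesis n_ge2 : (2 <= n)%N.
Hypothesis K_oriented : oriented_pseudo_manifold n K o.
Hypothesis nondeg : forall X : 'M[R]_(m, n.+1), in_Sigma_plus K ell X -> nondegenerate_faces K X.
Variable F : {set 'I_m}.
Hypothesis F_K : F \in K.
Hypothesis card_F : #|F| = n.-1.

Implicit Types (X : 'M[R]_(m, n.+1)) (s f : {set 'I_m}) (u v w : 'I_m) (c d : 'I_m -> R)
  (a b : 'rV[R]_n.+1).

Definition lincomb X s c : 'rV[R]_n.+1 := \sum_(v in s) c v *: row v X.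

Definition gram u v : R := if u == v then 1 else cosh_ (ell [set u; v]).

Lemma gram_gt0 u v : 0 < gram u v.
Proof. by rewrite /gram; case: eqP => _ //; rewrite divr_gt0 ?addr_gt0 ?expR_gt0. Qed.

Lemma mink_rows X s u v : in_Sigma_plus K ell X -> s \in K -> u \in s -> v \in s ->
  mink (row u X) (row v X) = gram u v.
Proof.
move=> hX hs hu hv; rewrite /gram; case: eqVneq => [->|nuv]; first by case: (hX.1 v).
case: K_oriented => [[_ [K_closed _ _ _ _]] _].
apply: hX.2 => //; apply: (K_closed s) => //; first by rewrite finset.subUset !finset.sub1set hu hv.
by rewrite cards2 nuv.
Qed.

Lemma mink_lincombl X s c a : mink (lincomb X s c) a = \sum_(v in s) c v * mink (row v X) a.
Proof. by rewrite /lincomb mink_suml; apply: eq_bigr => v _; rewrite minkZl. Qed.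

Lemma mink_lincombr X s c a : mink a (lincomb X s c) = \sum_(v in s) c v * mink a (row v X).
Proof. by rewrite minkC mink_lincombl; apply: eq_bigr => v _; rewrite minkC. Qed.

Lemma lincombD X s c d : lincomb X s (fun v => c v + d v) = lincomb X s c + lincomb X s d.
Proof. by rewrite /lincomb -big_split; apply: eq_bigr => v _; rewrite scalerDl. Qed.

Lemma lincombZ X s k c : lincomb X s (fun v => k * c v) = k *: lincomb X s c.
Proof. by rewrite /lincomb scaler_sumr; apply: eq_bigr => v _; rewrite scalerA. Qed.

Lemma lincombB X s c d : lincomb X s (fun v => c v - d v) = lincomb X s c - lincomb X s d.
Proof. by rewrite /lincomb -sumrB; apply: eq_bigr => v _; rewrite scalerBl. Qed.

Lemma lincomb_delta X s u : u \in s -> lincomb X s (fun v => (v == u)%:R) = row u X.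
Proof.
move=> hu; rewrite /lincomb (bigD1 u) //= eqxx scale1r big1 ?addr0 //.
by move=> v /andP[_ /negPf ->]; rewrite scale0r.
Qed.

Lemma eq_lincomb X s c d : {in s, c =1 d} -> lincomb X s c = lincomb X s d.
Proof. by move=> h; apply: eq_bigr => v hv; rewrite h. Qed.

Lemma lincomb_inj X s c d : in_Sigma_plus K ell X -> s \in K ->
  lincomb X s c = lincomb X s d -> {in s, c =1 d}.
Proof.
move=> hX hs e v hv; apply/eqP; rewrite -subr_eq0; apply/eqP.
apply: (nondeg hX hs (c := fun v => c v - d v)) => //.
by rewrite -/(lincomb X s _) lincombB e subrr.
Qed.

(* The rows x_u, u in F, lie in the future light cone and have pairwise
   positive products, so a positive combination of them is timelike. *)
Lemma interior_pointE X x : in_Sigma_plus K ell X -> interior_point X F x ->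
  exists g : 'I_m -> R, [/\ {in F, forall v, 0 < g v}, x = lincomb X F g,
                          mink x x = 1 & 0 < \sum_(v in F) g v].
Proof.
move=> hX [b [hb hsum ->]]; set y := \sum_(v in F) b v *: row v X.
have hy : y = lincomb X F b by [].
have [u0 hu0] : exists u0, u0 \in F.
  case: (set_0Vmem F) => [F0|[u0 hu0]]; last by exists u0.
  by move: hsum; rewrite F0 big_set0 => /eqP; rewrite eq_sym oner_eq0.
have term_le (h : 'I_m -> R) u : {in F, forall v, 0 <= h v} -> u \in F ->
    h u <= \sum_(v in F) h v.
  by move=> h0 hu; rewrite (bigD1 u) //= lerDl sumr_ge0 // => v /andP[/h0].
have hq : 0 < mink y y.
  have hby u : u \in F -> b u * b u <= b u * mink (row u X) y.
    move=> hu; rewrite ler_pM2l ?hb // hy mink_lincombr.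
    have -> : b u = b u * mink (row u X) (row u X).
      by rewrite (mink_rows hX F_K hu hu) /gram eqxx mulr1.
    apply: (term_le (fun v => b v * mink (row u X) (row v X))) => // v hv.
    by rewrite (mink_rows hX F_K hu hv) mulr_ge0 // ltW ?hb ?gram_gt0.
  rewrite {1}hy mink_lincombl.
  apply: (lt_le_trans _ (term_le (fun u => b u * mink (row u X) y) _ _ hu0)).
    by apply: (lt_le_trans _ (hby _ hu0)); rewrite mulr_gt0 ?hb.
  by move=> v hv; apply: le_trans (hby _ hv); rewrite mulr_ge0 ?ltW ?hb.
set q := mink y y in hq *.
have sq : 0 < Num.sqrt q by rewrite sqrtr_gt0.
exists (fun v => (Num.sqrt q)^-1 * b v); split.
- by move=> v hv; rewrite mulr_gt0 ?invr_gt0 ?hb.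
- by rewrite lincombZ.
- rewrite minkZl minkZr -/q mulrA -expr2 exprVn sqr_sqrtr ?ltW // mulVf //.
  by rewrite gt_eqF.
- by rewrite -mulr_sumr hsum mulr1 invr_gt0.
Qed.

Definition facet_apex f w : Prop := [/\ is_facet n K f, w \notin F & f = w |: F].

Lemma facet_apex_exists f : is_facet n K f -> F \subset f -> exists w, facet_apex f w.
Proof.
move=> hf hFf; have /andP[_ /eqP card_f] := hf.
have /eqP/cards1P [w hw] : #|f :\: F| = 1%N.
  by rewrite cardsD (finset.setIidPr hFf) card_f card_F; move: n_ge2; lia.
have : w \in f :\: F by rewrite hw finset.set11.
rewrite inE => /andP[hwF hwf]; exists w; split => //.
apply/finset.setP => u; rewrite finset.in_setU1.
case: (boolP (u \in F)) => huF; first by rewrite orbT (fintype.subsetP hFf).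
rewrite orbF; apply/idP/idP => [huf|/eqP -> //].
have : u \in f :\: F by rewrite inE huF huf.
by rewrite hw finset.in_set1.
Qed.

Lemma facets_through_face : exists g1 g2, g1 != g2 /\
  forall f, (is_facet n K f && (F \subset f)) = (f \in [set g1; g2]).
Proof.
case: K_oriented => [[_ [_ _ _ two_facets _]] _].
have /eqP/cards2P [g1 [g2 [hg12 hS]]] := two_facets F F_K card_F.
by exists g1, g2; split => // f; rewrite -hS inE.
Qed.

Definition face_rows X := [seq row v X | v <- enum F].

(* Vanishes as soon as a or b lies in the span of P(F). *)
Definition face_det X a b := \det (rowsmx (a :: b :: face_rows X)).

Lemma size_face_rows X : size (face_rows X) = n.-1.
Proof. by rewrite size_map -cardE card_F. Qed.

Lemma face_det_linr X a b1 b2 k l :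
  face_det X a (k *: b1 + l *: b2) = k * face_det X a b1 + l * face_det X a b2.
Proof. by apply: (@det_rowsmx_linear R n [:: a] (face_rows X)); rewrite /=; lia. Qed.

Lemma face_det_linl X a1 a2 b k l :
  face_det X (k *: a1 + l *: a2) b = k * face_det X a1 b + l * face_det X a2 b.
Proof. exact: (@det_rowsmx_linear R n [::] (b :: face_rows X)). Qed.

Lemma face_detZr X a b k : face_det X a (k *: b) = k * face_det X a b.
Proof. by have := face_det_linr X a b 0 k 0; rewrite !scale0r !addr0 mul0r addr0. Qed.

Lemma face_detDr X a b1 b2 : face_det X a (b1 + b2) = face_det X a b1 + face_det X a b2.
Proof. by have := face_det_linr X a b1 b2 1 1; rewrite !scale1r !mul1r. Qed.

Lemma face_detDl X a1 a2 b : face_det X (a1 + a2) b = face_det X a1 b + face_det X a2 b.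
Proof. by have := face_det_linl X a1 a2 b 1 1; rewrite !scale1r !mul1r. Qed.

Lemma face_detBr X a b1 b2 : face_det X a (b1 - b2) = face_det X a b1 - face_det X a b2.
Proof. by rewrite face_detDr -scaleN1r face_detZr mulN1r. Qed.

Lemma face_det_sumr X a (I : Type) (r : seq I) (P : pred I) (G : I -> 'rV[R]_n.+1) :
  face_det X a (\sum_(i <- r | P i) G i) = \sum_(i <- r | P i) face_det X a (G i).
Proof.
elim: r => [|x r IH]; last by rewrite !big_cons; case: (P x); rewrite ?face_detDr IH.
by rewrite !big_nil -(scale0r 0) face_detZr mul0r.
Qed.

Lemma face_det_aa X a : face_det X a a = 0.
Proof. by apply: (@det_rowsmx_eq0 R n _ 0 1) => //; lia. Qed.

Lemma face_detC X a b : face_det X b a = - face_det X a b.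
Proof.
have := face_det_aa X (a + b); rewrite face_detDl !face_detDr !face_det_aa add0r addr0.
by move=> /eqP; rewrite addr_eq0 => /eqP ->; rewrite opprK.
Qed.

Lemma face_det_row X a u : u \in F -> face_det X a (row u X) = 0.
Proof.
move=> hu; have hi : (index u (enum F) < n.-1)%N by rewrite -card_F cardE index_mem mem_enum.
apply: (@det_rowsmx_eq0 R n _ 1 (index u (enum F)).+2) => //; try lia.
by rewrite /= /face_rows (nth_map u) ?nth_index ?mem_enum // -cardE card_F.
Qed.

Lemma face_det_lincomb X a c : face_det X a (lincomb X F c) = 0.
Proof. by rewrite face_det_sumr big1 // => v hv; rewrite face_detZr face_det_row // mulr0. Qed.

Definition face_normal_pair X a b : Prop :=
  [/\ {in F, forall u, mink a (row u X) = 0}, {in F, forall u, mink b (row u X) = 0},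
      mink a a = -1, mink b b = -1 & mink a b = 0].

(* The Gram matrix of (a, b, x_u for u in F) only depends on the edge lengths. *)
Lemma face_det_sqr_eq X X' a b a' b' :
  in_Sigma_plus K ell X -> in_Sigma_plus K ell X' ->
  face_normal_pair X a b -> face_normal_pair X' a' b' ->
  face_det X a b ^+ 2 = face_det X' a' b' ^+ 2.
Proof.
have [u0 hu0] : exists u0, u0 \in F.
  by apply/card_gt0P; rewrite card_F; move: n_ge2; lia.
pose E (i j : nat) : R := if ((i < 2) || (j < 2))%N then (if i == j then -1 else 0)
  else gram (nth u0 (enum F) (i - 2)) (nth u0 (enum F) (j - 2)).
have gramE Y p q : in_Sigma_plus K ell Y -> face_normal_pair Y p q ->
    rowsmx (p :: q :: face_rows Y) *m mink_mx R n *m (rowsmx (p :: q :: face_rows Y))^T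
    = \matrix_(i, j) E i j.
  move=> hY [hp hq hpp hqq hpq]; apply/matrixP => i j; rewrite mink_gramE !row_rowsmx !mxE /E.
  have face_row k : (k < n.-1)%N -> nth 0 (face_rows Y) k = row (nth u0 (enum F) k) Y.
    by move=> hk; rewrite /face_rows (nth_map u0) // -cardE card_F.
  have face_mem k : (k < n.-1)%N -> nth u0 (enum F) k \in F.
    by move=> hk; rewrite -mem_enum mem_nth // -cardE card_F.
  case: i j => [[|[|k]] hk] [[|[|l]] hl] /=.
  - by rewrite hpp.
  - exact: hpq.
  - by rewrite face_row ?hp ?face_mem //; lia.
  - by rewrite minkC hpq.
  - by rewrite hqq.
  - by rewrite face_row ?hq ?face_mem //; lia.
  - by rewrite minkC face_row ?hp ?face_mem //; lia.
  - by rewrite minkC face_row ?hq ?face_mem //; lia.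
  - by rewrite !subSS !subn0 !face_row ?(mink_rows hY F_K) ?face_mem //; lia.
move=> hX hX' h h'; have := congr1 determinant (etrans (gramE _ _ _ hX h) (esym (gramE _ _ _ hX' h'))).
rewrite !det_mulmx !det_tr => e.
apply: (mulIf (_ : \det (mink_mx R n) != 0)); first by rewrite det_mink_mx signr_eq0.
by move: e; rewrite !expr2 ![_ * \det (mink_mx R n)]mulrC !mulrA.
Qed.

Definition face_det_sqr : R := xget 0
  [set v | exists X a b, [/\ in_Sigma_plus K ell X, face_normal_pair X a b & v = face_det X a b ^+ 2]].

Lemma face_det_sqrE X a b : in_Sigma_plus K ell X -> face_normal_pair X a b ->
  face_det X a b ^+ 2 = face_det_sqr.
Proof.
move=> hX hab; rewrite /face_det_sqr; set P := (X in xget 0 X).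
have [X' [a' [b' [hX' hab' ->]]]] : P (xget 0 P).
  by apply: xgetPex; exists (face_det X a b ^+ 2), X, a, b.
exact: face_det_sqr_eq.
Qed.

Lemma sqr_neg_sign_eq (a V : R) k : a ^+ 2 = V -> (-1) ^+ k * a < 0 ->
  a = - (-1) ^+ k * Num.sqrt V.
Proof.
move=> <-; rewrite sqrtr_sqr -signr_odd; case: (odd k); rewrite ?expr1 ?expr0 => h.
  by rewrite opprK mul1r gtr0_norm // -oppr_lt0 -mulN1r.
by rewrite mulN1r ltr0_norm ?opprK // -[a]mul1r.
Qed.

Let lt_ord (u v : 'I_m) := (u < v)%N.

Let lt_ord_trans : transitive lt_ord.
Proof. by move=> a b c; exact: ltn_trans. Qed.

Lemma enum_setE (A : {set 'I_m}) : enum A = [seq u <- enum 'I_m | u \in A].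
Proof.
rewrite -(deprecated_filter_index_enum predT) filter_predT.
by rewrite -(deprecated_filter_index_enum (fun x => x \in A)); apply: eq_enum.
Qed.

Lemma pairwise_enum_set (A : {set 'I_m}) : pairwise lt_ord (enum A).
Proof.
rewrite -sorted_pairwise // enum_setE; apply: sorted_filter => //.
have -> : sorted lt_ord (enum 'I_m) = sorted ltn (map val (enum 'I_m)) by rewrite sorted_map.
by rewrite val_enum_ord iota_ltn_sorted.
Qed.

Lemma tangent_row X x g u : x = lincomb X F g -> mink x x = 1 -> u \in F ->
  span_of X F (row u X - mink (row u X) x *: x) /\
  mink (row u X - mink (row u X) x *: x) x = 0.
Proof.
move=> hxg hxx hu; split; last by rewrite minkBl minkZl hxx mulr1 subrr.
exists (fun v => (v == u)%:R - mink (row u X) x * g v).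
by rewrite -/(lincomb X F _) lincombB lincombZ lincomb_delta // -hxg.
Qed.

Section Facet.
Variables (f : {set 'I_m}) (w : 'I_m).
Hypothesis apex_fw : facet_apex f w.

Let f_K : f \in K. Proof. by case: apex_fw => /andP[]. Qed.
Let w_notin_F : w \notin F. Proof. by case: apex_fw. Qed.
Let f_eq : f = w |: F. Proof. by case: apex_fw. Qed.
Let w_in_f : w \in f. Proof. by rewrite f_eq finset.setU11. Qed.
Let F_sub_f : F \subset f. Proof. by rewrite f_eq finset.subsetUr. Qed.

Lemma lincomb_apex X c : lincomb X f c = c w *: row w X + lincomb X F c.
Proof. by rewrite /lincomb f_eq big_setU1. Qed.

Lemma lincomb_facet_face X g : lincomb X F g = lincomb X f (fun v => if v \in F then g v else 0).
Proof.
rewrite lincomb_apex (negPf w_notin_F) scale0r add0r.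
by apply: eq_lincomb => v ->.
Qed.

Lemma mink_lincomb_row X c u : in_Sigma_plus K ell X -> u \in f ->
  mink (lincomb X f c) (row u X) = \sum_(v in f) c v * gram v u.
Proof.
move=> hX hu; rewrite mink_lincombl; apply: eq_bigr => v hv.
by rewrite (mink_rows hX f_K hv hu).
Qed.

Lemma mink_lincomb X c d : in_Sigma_plus K ell X ->
  mink (lincomb X f c) (lincomb X f d) = \sum_(u in f) d u * \sum_(v in f) c v * gram v u.
Proof. by move=> hX; rewrite mink_lincombr; apply: eq_bigr => u hu; rewrite mink_lincomb_row. Qed.

Definition is_normal_coef X c : Prop :=
  [/\ {in F, forall u, mink (lincomb X f c) (row u X) = 0},
      mink (lincomb X f c) (lincomb X f c) = -1 & 0 < c w].

Lemma span_facet_of_face X a : span_of X F a -> span_of X f a.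
Proof.
case=> g ->; exists (fun v => if v \in F then g v else 0).
exact: lincomb_facet_face.
Qed.

Lemma inward_normal_coef X x nv : in_Sigma_plus K ell X -> interior_point X F x ->
  inward_normal X F f x nv -> exists2 c, nv = lincomb X f c & is_normal_coef X c.
Proof.
move=> hX hx [[c hc] hnx horth hnn [eps heps hcone]].
have [g [hg hxg hxx hS]] := interior_pointE hX hx.
have {}hc : nv = lincomb X f c by [].
exists c => //; rewrite /is_normal_coef -hc.
have hnF : {in F, forall u, mink nv (row u X) = 0}.
  move=> u hu; have [span_F hsx] := tangent_row hxg hxx hu.
  by move: (horth _ span_F hsx); rewrite minkBr minkZr hnx mulr0 subr0.
(* x + t nv lies in the cone over P(f) for small t > 0, while x has no x_w-component. *)
have hcw : 0 <= c w.
  have ht : 0 < eps / 2 by rewrite divr_gt0.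
  have ht2 : eps / 2 < eps by rewrite ltr_pdivrMr // ltr_pMr // ltr1n.
  have [e [he hxe]] := hcone _ ht ht2.
  have : lincomb X f (fun v => (if v \in F then g v else 0) + eps / 2 * c v) = lincomb X f e.
    by rewrite lincombD lincombZ -lincomb_facet_face -hxg -hc.
  move/(lincomb_inj hX f_K)/(_ _ w_in_f); rewrite (negPf w_notin_F) add0r => hew.
  by have := he w; rewrite -hew pmulr_rge0.
split => //; rewrite lt_neqAle hcw andbT; apply/eqP => hc0.
move: hnn; rewrite {2}hc lincomb_apex -hc0 scale0r add0r mink_lincombr big1 => [|v hv].
  by move/eqP; rewrite eq_sym oppr_eq0 oner_eq0.
by rewrite hnF // mulr0.
Qed.

(* Two normal coefficient vectors, for possibly different polyhedra, have the
   same Gram data; transporting one to the first polyhedron gives a second unit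
   normal, which must be a positive multiple of the first since the difference
   is orthogonal to the unit timelike vector x. *)
Lemma is_normal_coef_unique X X' x c c' :
  in_Sigma_plus K ell X -> in_Sigma_plus K ell X' -> interior_point X F x ->
  is_normal_coef X c -> is_normal_coef X' c' -> {in f, c =1 c'}.
Proof.
move=> hX hX' hx [hc1 hc2 hc3] [hd1 hd2 hd3].
have [g [hg hxg hxx hS]] := interior_pointE hX hx.
set N := lincomb X f c; set N' := lincomb X f c'.
have hN'F : {in F, forall u, mink N' (row u X) = 0}.
  move=> u hu; have huf := fintype.subsetP F_sub_f u hu.
  by rewrite /N' mink_lincomb_row // -(mink_lincomb_row _ hX') // hd1.
have hN'N' : mink N' N' = -1 by rewrite /N' mink_lincomb // -(mink_lincomb _ _ hX') hd2.
set k := c' w / c w.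
have hk : 0 < k by rewrite divr_gt0.
set z := N' - k *: N.
have hz : z = lincomb X F (fun v => c' v - k * c v).
  rewrite /z /N /N' -lincombZ -lincombB lincomb_apex.
  by rewrite /k divfK ?gt_eqF // subrr scale0r add0r.
have hzF : {in F, forall u, mink z (row u X) = 0}.
  by move=> u hu; rewrite /z minkBl minkZl hN'F // hc1 // mulr0 subrr.
have hzz : mink z z = 0 by rewrite {2}hz mink_lincombr big1 // => v hv; rewrite hzF // mulr0.
have hzx : mink z x = 0 by rewrite hxg mink_lincombr big1 // => v hv; rewrite hzF // mulr0.
have eN : N' = k *: N.
  by apply/eqP; rewrite -subr_eq0 -/z (orth_timelike_null_eq0 hxx hzx hzz).
have k1 : k = 1 by move: hN'N'; rewrite eN minkZl minkZr hc2 => e; nra.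
by apply: (lincomb_inj hX f_K); rewrite -/N -/N' eN k1 scale1r.
Qed.

Definition normal_coef : 'I_m -> R :=
  xget (fun _ => 0) [set c | exists X, in_Sigma_plus K ell X /\ is_normal_coef X c].

Lemma normal_coefE X x c : in_Sigma_plus K ell X -> interior_point X F x ->
  is_normal_coef X c -> {in f, c =1 normal_coef}.
Proof.
move=> hX hx hc; rewrite /normal_coef; set P := (X in xget _ X).
have [X' [hX' hc']] : P (xget (fun _ => 0) P) by apply: xgetPex; exists c, X.
exact: (is_normal_coef_unique hX hX' hx).
Qed.

Definition facet_normal X := lincomb X f normal_coef.

Lemma inward_normalE X x nv : in_Sigma_plus K ell X -> interior_point X F x ->
  inward_normal X F f x nv -> nv = facet_normal X.
Proof.
move=> hX hx hnv; have [c -> hc] := inward_normal_coef hX hx hnv.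
exact/eq_lincomb/(normal_coefE hX hx hc).
Qed.

Definition apex_index := #|[set u in F | (u < w)%N]|.

Let F_below := [seq u <- enum F | lt_ord u w].
Let F_above := [seq u <- enum F | lt_ord w u].

Lemma enum_face_split : enum F = F_below ++ F_above.
Proof.
apply: (irr_sorted_eq lt_ord_trans); first by move=> u; exact: ltnn.
- by rewrite (sorted_pairwise lt_ord_trans) pairwise_enum_set.
- rewrite (sorted_pairwise lt_ord_trans) pairwise_cat (pairwise_filter (fun u => lt_ord u w) (pairwise_enum_set F))
    (pairwise_filter (fun u => lt_ord w u) (pairwise_enum_set F)) andbT andbT.
  by apply/allrelP => a b; rewrite !mem_filter => /andP[ha _] /andP[hb _]; exact: ltn_trans ha hb.
- move=> u; rewrite fintype.mem_enum mem_cat /F_below /F_above.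
  rewrite (mem_filter (fun u => lt_ord u w)) (mem_filter (fun u => lt_ord w u)) !fintype.mem_enum.
  case: (boolP (u \in F)) => hu; rewrite ?andbF //= !andbT.
  have : u != w by apply: contraNneq w_notin_F => <-.
  by rewrite -(inj_eq val_inj) /lt_ord; case: ltngtP.
Qed.

Lemma enum_facet_split : enum f = F_below ++ w :: F_above.
Proof.
apply: (irr_sorted_eq lt_ord_trans); first by move=> u; exact: ltnn.
- by rewrite (sorted_pairwise lt_ord_trans) pairwise_enum_set.
- rewrite (sorted_pairwise lt_ord_trans) pairwise_cat /= (pairwise_filter (fun u => lt_ord u w) (pairwise_enum_set F))
    (pairwise_filter (fun u => lt_ord w u) (pairwise_enum_set F)) andbT.
  apply/andP; split; last by apply/allP => u; rewrite mem_filter => /andP[].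
  apply/allrelP => a b; rewrite mem_filter inE => /andP[ha _].
  case/orP => [/eqP -> //|]; rewrite mem_filter => /andP[hb _].
  exact: ltn_trans ha hb.
- move=> u; rewrite fintype.mem_enum f_eq finset.in_setU1 mem_cat inE /F_below /F_above.
  rewrite (mem_filter (fun u => lt_ord u w)) (mem_filter (fun u => lt_ord w u)) !fintype.mem_enum.
  case: (eqVneq u w) => [->|nuw] /=; first by rewrite /lt_ord ltnn.
  case: (boolP (u \in F)) => hu; rewrite ?andbF //= !andbT.
  by move: nuw; rewrite -(inj_eq val_inj) /lt_ord; case: ltngtP.
Qed.

Lemma size_F_below : size F_below = apex_index.
Proof.
rewrite /apex_index cardE enum_setE /F_below enum_setE -filter_predI.
by congr size; apply: eq_filter => u; rewrite !inE andbC.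
Qed.

Lemma det_rows_facet X a :
  \det (rowsmx (a :: [seq row v X | v <- enum f])) = (-1) ^+ apex_index * face_det X a (row w X).
Proof.
rewrite enum_facet_split map_cat /= det_rowsmx_insert; last first.
  have := size_face_rows X; rewrite /face_rows enum_face_split map_cat size_cat !size_map => e.
  by rewrite ?size_map; move: n_ge2 e; lia.
by rewrite ?size_map size_F_below /face_det /face_rows enum_face_split map_cat.
Qed.

Lemma face_det_lincomb_apex X a c : face_det X a (lincomb X f c) = c w * face_det X a (row w X).
Proof. by rewrite lincomb_apex face_detDr face_det_lincomb addr0 face_detZr. Qed.

Lemma sum_facet_enum (V : zmodType) (h : 'I_m -> V) :
  \sum_(v in f) h v = \sum_(j < n) h (nth w (enum f) j).
Proof.
have size_f : size (enum f) = n by rewrite -cardE; case: apex_fw => /andP[_ /eqP].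
by rewrite -big_enum (big_nth w) size_f big_mkord.
Qed.

Lemma fvert_nth X j : (j < n)%N -> fvert X f j = row (nth w (enum f) j) X.
Proof.
move=> hj; rewrite /fvert (nth_map w) // -cardE.
by case: apex_fw => /andP[_ /eqP ->].
Qed.

(* The orientation frame at x = sum_(v in F) g v *: x_v has determinant
   - (sum_(v in F) g v) * (-1) ^+ apex_index * face_det X M x_w. *)
Lemma face_det_sign X x M c : in_Sigma_plus K ell X -> interior_point X F x ->
  oriented_normal X o f x M -> 0 < c w ->
  (-1) ^+ (o f + apex_index) * face_det X M (lincomb X f c) < 0.
Proof.
move=> hX hx [_ _ _ hdet] hcw.
have [g [hg hxg hxx hS]] := interior_pointE hX hx.
pose g0 v := if v \in F then g v else 0.
have hx' : x = \sum_(j < n) g0 (nth w (enum f) j) *: fvert X f j.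
  rewrite hxg lincomb_facet_face /lincomb (sum_facet_enum (fun v => g0 v *: row v X)).
  by apply: eq_bigr => j _; rewrite fvert_nth.
have hS' : \sum_(j < n) g0 (nth w (enum f) j) = \sum_(v in F) g v.
  rewrite -(sum_facet_enum g0) f_eq big_setU1 //= /g0 (negPf w_notin_F) add0r.
  by apply: eq_bigr => v ->.
have n_gt0 : (0 < n)%N by exact: leq_trans n_ge2.
move: hdet; rewrite /orient_frame -/(frame _ _ _).
rewrite (det_frame_proj_tan n_gt0 M (d := fun j => g0 (nth w (enum f) j)) hx') hS'.
have -> : \matrix_(i < n.+1) (if (i : nat) == 0%N then M else fvert X f i.-1) =
          rowsmx (M :: [seq row v X | v <- enum f]).
  by apply/matrixP => i j; rewrite !mxE; case: i => [[|k] hk].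
rewrite det_rows_facet face_det_lincomb_apex exprD.
set s := (-1) ^+ o f; set t := (-1) ^+ apex_index; set D := face_det X M (row w X) => h.
have hY : s * t * D < 0.
  have : 0 < - ((\sum_(v in F) g v) * (s * t * D)) by move: h; congr (0 < _); ring.
  by rewrite oppr_gt0 pmulr_rlt0.
by rewrite (_ : s * t * (c w * D) = c w * (s * t * D)); [rewrite pmulr_rlt0 | ring].
Qed.

Lemma normal_pair_of X x M c : in_Sigma_plus K ell X -> interior_point X F x ->
  oriented_normal X o f x M -> is_normal_coef X c -> face_normal_pair X M (lincomb X f c).
Proof.
move=> hX hx [hMx hMorth hMM _] [hc1 hc2 hc3].
have [g [hg hxg hxx hS]] := interior_pointE hX hx.
split => //; last first.
  apply: hMorth; first by exists c.
  by rewrite hxg mink_lincombr big1 // => v hv; rewrite hc1 // mulr0.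
move=> u hu; have [hsp hsx] := tangent_row hxg hxx hu.
by move: (hMorth _ (span_facet_of_face hsp) hsx); rewrite minkBr minkZr hMx mulr0 subr0.
Qed.

Definition oriented_face_det : R := - (-1) ^+ (o f + apex_index) * Num.sqrt face_det_sqr.

Lemma face_det_oriented_normal X x M N : in_Sigma_plus K ell X -> interior_point X F x ->
  oriented_normal X o f x M -> inward_normal X F f x N -> face_det X M N = oriented_face_det.
Proof.
move=> hX hx hM hN; have [c -> hc] := inward_normal_coef hX hx hN.
apply: (sqr_neg_sign_eq (face_det_sqrE hX (normal_pair_of hX hx hM hc))).
by case: hc => _ _ hcw; exact: face_det_sign hX hx hM hcw.
Qed.

End Facet.

Lemma signr_odd_addn (i j : nat) : odd (i + j) -> (-1) ^+ j = - (-1) ^+ i :> R.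
Proof.
rewrite -(signr_odd _ i) -(signr_odd _ j) oddD.
by case: (odd i); case: (odd j) => //= _; rewrite ?expr0 ?expr1 ?opprK.
Qed.

Lemma oriented_face_det_opp f1 w1 f2 w2 : facet_apex f1 w1 -> facet_apex f2 w2 -> f1 != f2 ->
  oriented_face_det f2 w2 = - oriented_face_det f1 w1.
Proof.
move=> [hf1 hw1 e1] [hf2 hw2 e2] hne.
have hodd : odd (o f1 + apex_index w1 + (o f2 + apex_index w2)).
  case: K_oriented => _ orient; rewrite addnA.
  by apply: (orient F f1 f2 w1 w2) => //; rewrite ?e1 ?e2 ?finset.subsetUr // !inE eqxx ?hw1 ?hw2.
by rewrite /oriented_face_det (signr_odd_addn hodd) mulNr.
Qed.

Definition angle_expi X f1 w1 f2 w2 : R[i] :=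
  Complex (- mink (facet_normal f1 w1 X) (facet_normal f2 w2 X))
    (face_det X (facet_normal f1 w1 X) (facet_normal f2 w2 X) / oriented_face_det f1 w1).

Lemma dihedral_angle_expi X f1 w1 f2 w2 x alpha :
  in_Sigma_plus K ell X -> facet_apex f1 w1 -> facet_apex f2 w2 -> interior_point X F x ->
  is_oriented_dihedral_angle X o F f1 f2 x alpha ->
  Complex (cos alpha) (sin alpha) = angle_expi X f1 w1 f2 w2.
Proof.
move=> hX h1 h2 hx [n1 [n2 [m1 [hn1 hn2 hm1 e2]]]].
rewrite /angle_expi -(inward_normalE h1 hX hx hn1) -(inward_normalE h2 hX hx hn2) e2.
have [c hc hcn] := inward_normal_coef h1 hX hx hn1.
have [_ _ _ hnn hmn] := normal_pair_of h1 hX hx hm1 hcn; rewrite -hc in hnn hmn.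
have kap := face_det_oriented_normal h1 hX hx hm1 hn1.
have kap0 : oriented_face_det f1 w1 != 0.
  rewrite -kap hc; case: hcn => _ _ hcw.
  by apply: contraTneq (face_det_sign h1 hX hx hm1 hcw) => ->; rewrite mulr0 ltxx.
congr Complex.
  by rewrite minkBr !minkZr hnn minkC hmn; ring.
rewrite face_detBr !face_detZr face_det_aa (face_detC X m1 n1) kap.
by rewrite mulr0 sub0r mulrN opprK mulfK.
Qed.

Lemma angle_expiC X f1 w1 f2 w2 : facet_apex f1 w1 -> facet_apex f2 w2 -> f1 != f2 ->
  angle_expi X f2 w2 f1 w1 = angle_expi X f1 w1 f2 w2.
Proof.
move=> h1 h2 hne; rewrite /angle_expi minkC face_detC (oriented_face_det_opp h1 h2 hne).
by rewrite invrN mulrN mulNr opprK.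
Qed.

Lemma polyfun_lincomb s c j : polyfun (fun X => lincomb X s c 0 j).
Proof.
apply: polyfun_ext (polyfun_sum _ _ (fun v => polyfunM (polyfun_cst _ _ (c v)) (polyfun_coord _ v j))) _.
by move=> X; rewrite /lincomb summxE; apply: eq_bigr => v _; rewrite !mxE.
Qed.

Lemma polyfun_mink (p q : 'M[R]_(m, n.+1) -> 'rV[R]_n.+1) :
  (forall j, polyfun (fun X => p X 0 j)) -> (forall j, polyfun (fun X => q X 0 j)) ->
  polyfun (fun X => mink (p X) (q X)).
Proof.
move=> hp hq; apply: polyfunD; first exact: polyfunM.
by apply/polyfunN/polyfun_sum => j; exact: polyfunM.
Qed.

Lemma polyfun_face_det (p q : 'M[R]_(m, n.+1) -> 'rV[R]_n.+1) :
  (forall j, polyfun (fun X => p X 0 j)) -> (forall j, polyfun (fun X => q X 0 j)) ->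
  polyfun (fun X => face_det X (p X) (q X)).
Proof.
move=> hp hq; have [u0 _] : exists u0, u0 \in F.
  by apply/card_gt0P; rewrite card_F; move: n_ge2; lia.
apply: polyfun_det => i j.
apply: (@polyfun_ext _ _ _ (fun X => (nth 0 (p X :: q X :: face_rows X) i) 0 j)) => [|X]; last first.
  by rewrite mxE.
case: i => [[|[|k]] hk] /=; [exact: hp | exact: hq|].
case: (ltnP k (size (enum F))) => hks.
  apply: polyfun_ext (polyfun_coord _ (nth u0 (enum F) k) j) _ => X.
  by rewrite /face_rows (nth_map u0) // mxE.
by apply: polyfun_ext (polyfun_cst _ _ 0) _ => X; rewrite /face_rows nth_default ?size_map // mxE.
Qed.

Lemma angle_expi_polyfun f1 w1 f2 w2 : exists Q : mpoly.mpoly (m * n.+1) R[i],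
  forall X, mpoly.meval (coords X) Q = angle_expi X f1 w1 f2 w2.
Proof.
apply: polyfun_complex; first by apply/polyfunN/polyfun_mink => j; exact: polyfun_lincomb.
apply: polyfunM; last exact: polyfun_cst.
by apply: polyfun_face_det => j; exact: polyfun_lincomb.
Qed.

End Geometry.


Unset Implicit Arguments.

Theorem lemma24 (R : realType) (n m : nat) (K : {set {set 'I_m}})
    (o : {set 'I_m} -> bool) (ell : {set 'I_m} -> R) :
  (2 <= n)%N ->
  oriented_pseudo_manifold n K o ->
  (forall e, e \in K -> #|e| = 2%N -> 0 < ell e) ->
  (forall X : 'M[R]_(m, n.+1), in_Sigma_plus K ell X -> nondegenerate_faces K X) ->
  forall F : {set 'I_m}, F \in K -> #|F| = n.-1 ->
  exists Q : mpoly.mpoly (m * n.+1) R[i],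
    forall X : 'M[R]_(m, n.+1), in_Sigma_plus K ell X ->
    forall f1 f2 : {set 'I_m},
      is_facet n K f1 -> is_facet n K f2 -> f1 != f2 ->
      F \subset f1 -> F \subset f2 ->
    forall (x : 'rV[R]_n.+1) (alpha : R),
      interior_point X F x ->
      is_oriented_dihedral_angle X o F f1 f2 x alpha ->
      mpoly.meval (coords X) Q = Complex (cos alpha) (sin alpha).
Proof.
move=> n_ge2 K_or _ nondeg F F_K card_F.
have [g1 [g2 [g12 through]]] := facets_through_face K_or F_K card_F.
have /andP[hg1 hFg1] : is_facet n K g1 && (F \subset g1) by rewrite through !inE eqxx.
have /andP[hg2 hFg2] : is_facet n K g2 && (F \subset g2) by rewrite through !inE eqxx orbT.
have [w1 h1] := facet_apex_exists n_ge2 F_K card_F hg1 hFg1.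
have [w2 h2] := facet_apex_exists n_ge2 F_K card_F hg2 hFg2.
have [Q hQ] := angle_expi_polyfun o ell n_ge2 F_K card_F g1 w1 g2 w2.
exists Q => X hX f1 f2 hf1 hf2 f12 hF1 hF2 x alpha hx angle.
have expi := dihedral_angle_expi n_ge2 K_or nondeg F_K card_F hX.
rewrite hQ.
have /finset.set2P[ef1|ef1] : f1 \in [set g1; g2] by rewrite -through hf1 hF1.
all: have /finset.set2P[ef2|ef2] : f2 \in [set g1; g2] by rewrite -through hf2 hF2.
all: subst f1 f2.
- by rewrite eqxx in f12.
- by rewrite (expi _ _ _ _ _ _ h1 h2 hx angle).
- by rewrite (expi _ _ _ _ _ _ h2 h1 hx angle) angle_expiC.
- by rewrite eqxx in f12.
Qed.
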